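(* Let $\lambda_1,\dots,\lambda_5$ be arbitrary integers and for variables $x_1,x_2,x_3$ let $A(x_1,x_2,x_3)$ be the $3\times 3$ matrix $[x_{ij}]$ with $x_{11}=x_1,\ x_{12}=x_2,\ x_{13}=x_3$, $x_{21}=-\lambda_3(\lambda_1-\lambda_2-\lambda_3+\lambda_5)x_2-\lambda_3(\lambda_2-\lambda_4)x_3$, $x_{22}=x_1+\lambda_1x_2+\lambda_2x_3$, $x_{23}=\lambda_3x_2+\lambda_3x_3$, $x_{31}=-\lambda_3(\lambda_2-\lambda_4)x_2+(-\lambda_1\lambda_4+\lambda_2^2-\lambda_2\lambda_5+\lambda_3\lambda_4)x_3$, $x_{32}=\lambda_2x_2+\lambda_4x_3$, $x_{33}=x_1+\lambda_3x_2+\lambda_5x_3$. Then for independent variables $x_i,y_i$, $$A(x_1,x_2,x_3)\,A(y_1,y_2,y_3)=A(z_1,z_2,z_3),$$ where $z_1=x_1y_1-\lambda_3(\lambda_1-\lambda_2-\lambda_3+\lambda_5)x_2y_2-\lambda_3(\lambda_2-\lambda_4)x_2y_3-\lambda_3(\lambda_2-\lambda_4)x_3y_2+(-\lambda_1\lambda_4+\lambda_2^2-\lambda_2\lambda_5+\lambda_3\lambda_4)x_3y_3$, $z_2=x_1y_2+x_2y_1+\lambda_1x_2y_2+\lambda_2x_2y_3+\lambda_2x_3y_2+\lambda_4x_3y_3$, $z_3=x_1y_3+\lambda_3x_2y_2+\lambda_3x_2y_3+x_3y_1+\lambda_3x_3y_2+\lambda_5x_3y_3$. Consequently the ternary cubic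 form $f(x_1,x_2,x_3)=\det A(x_1,x_2,x_3)$ satisfies $f(x_1,x_2,x_3)f(y_1,y_2,y_3)=f(z_1,z_2,z_3)$. *)

From mathcomp Require Import all_boot all_algebra.
Set Implicit Arguments. Unset Strict Implicit. Unset Printing Implicit Defensive.
Import GRing.Theory.
Local Open Scope ring_scope.

Definition Amx (R : comNzRingType) (l1 l2 l3 l4 l5 : int) (x1 x2 x3 : R) : 'M[R]_3 :=
  let L1 := l1%:~R : R in let L2 := l2%:~R : R in let L3 := l3%:~R : R in
  let L4 := l4%:~R : R in let L5 := l5%:~R : R in
  \matrix_(i < 3, j < 3)
    match nat_of_ord i, nat_of_ord j with
    | 0, 0 => x1
    | 0, 1 => x2
    | 0, _ => x3
    | 1, 0 => - L3 * (L1 - L2 - L3 + L5) * x2 - L3 * (L2 - L4) * x3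
    | 1, 1 => x1 + L1 * x2 + L2 * x3
    | 1, _ => L3 * x2 + L3 * x3
    | _, 0 => - L3 * (L2 - L4) * x2
              + (- L1 * L4 + L2 ^+ 2 - L2 * L5 + L3 * L4) * x3
    | _, 1 => L2 * x2 + L4 * x3
    | _, _ => x1 + L3 * x2 + L5 * x3
    end.

Definition zz1 (R : comNzRingType) (l1 l2 l3 l4 l5 : int) (x1 x2 x3 y1 y2 y3 : R) : R :=
  let L1 := l1%:~R : R in let L2 := l2%:~R : R in let L3 := l3%:~R : R in
  let L4 := l4%:~R : R in let L5 := l5%:~R : R in
  x1 * y1 - L3 * (L1 - L2 - L3 + L5) * x2 * y2 - L3 * (L2 - L4) * x2 * y3
  - L3 * (L2 - L4) * x3 * y2 + (- L1 * L4 + L2 ^+ 2 - L2 * L5 + L3 * L4) * x3 * y3.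

Definition zz2 (R : comNzRingType) (l1 l2 l3 l4 l5 : int) (x1 x2 x3 y1 y2 y3 : R) : R :=
  let L1 := l1%:~R : R in let L2 := l2%:~R : R in
  let L4 := l4%:~R : R in
  x1 * y2 + x2 * y1 + L1 * x2 * y2 + L2 * x2 * y3 + L2 * x3 * y2 + L4 * x3 * y3.

Definition zz3 (R : comNzRingType) (l1 l2 l3 l4 l5 : int) (x1 x2 x3 y1 y2 y3 : R) : R :=
  let L3 := l3%:~R : R in let L5 := l5%:~R : R in
  x1 * y3 + L3 * x2 * y2 + L3 * x2 * y3 + x3 * y1 + L3 * x3 * y2 + L5 * x3 * y3.

From mathcomp Require Import all_boot all_algebra.
From mathcomp Require Import ring.
Local Open Scope ring_scope.
Import GRing.Theory.

(* The cubic form f = det A is multiplicative because A itself is: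
   the family of matrices A(x1,x2,x3) is closed under multiplication, with the
   bilinear composition law (x, y) |-> z of the statement.  The determinant
   identity then follows from the multiplicativity of the determinant
   (det_mulmx).  The
   integers l_i enter only through their images L_i in R, and the identities
   hold for arbitrary L_i, so they are generalized before normalizing. *)

Lemma mulmx3E (R : pzSemiRingType) (M N : 'M[R]_3) (i j : 'I_3) :
  (M *m N) i j = M i 0 * N 0 j + M i 1 * N 1 j + M i 2 * N 2 j.
Proof.
rewrite mxE !big_ord_recl big_ord0 addr0 addrA.
by congr (_ * _ + _ * _ + _ * _); congr (_ _ _); apply/val_inj.
Qed.

Lemma Amx_mul (l1 l2 l3 l4 l5 : int) (R : comNzRingType)
    (x1 x2 x3 y1 y2 y3 : R) :
  Amx l1 l2 l3 l4 l5 x1 x2 x3 *m Amx l1 l2 l3 l4 l5 y1 y2 y3 =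
  Amx l1 l2 l3 l4 l5 (zz1 l1 l2 l3 l4 l5 x1 x2 x3 y1 y2 y3)
    (zz2 l1 l2 l3 l4 l5 x1 x2 x3 y1 y2 y3)
    (zz3 l1 l2 l3 l4 l5 x1 x2 x3 y1 y2 y3).
Proof.
apply/matrixP => i j; rewrite mulmx3E !mxE /zz1 /zz2 /zz3 /=.
move: (l1%:~R : R) (l2%:~R : R) (l3%:~R : R) (l4%:~R : R) (l5%:~R : R)
  => L1 L2 L3 L4 L5.
by case: i => [[|[|[|i]]] Hi] //; case: j => [[|[|[|j]]] Hj] //=; ring.
Qed.

Theorem mainTheorem2 (l1 l2 l3 l4 l5 : int) (R : comNzRingType)
    (x1 x2 x3 y1 y2 y3 : R) :
  let z1 := zz1 l1 l2 l3 l4 l5 x1 x2 x3 y1 y2 y3 in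
  let z2 := zz2 l1 l2 l3 l4 l5 x1 x2 x3 y1 y2 y3 in
  let z3 := zz3 l1 l2 l3 l4 l5 x1 x2 x3 y1 y2 y3 in
  let A := Amx l1 l2 l3 l4 l5 in
  A x1 x2 x3 *m A y1 y2 y3 = A z1 z2 z3 /\
  \det (A x1 x2 x3) * \det (A y1 y2 y3) = \det (A z1 z2 z3).
Proof.
move=> z1 z2 z3 A.
have mulA : A x1 x2 x3 *m A y1 y2 y3 = A z1 z2 z3 by exact: Amx_mul.
by split; rewrite // -det_mulmx mulA.
Qed.
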